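(* Let $\mathbb{F}_q$ be any finite field and let $\mathcal{Q}=\mathbb{F}_q^3$ with the relation: $(x_1,y_1,z_1)$ and $(x_2,y_2,z_2)$ commute iff $x_1y_2-y_1x_2=z_1-z_2$. Then there exist two lines $L_1,L_2$ in $\mathbb{F}_q^3$ such that $L_1\cup L_2$ is a non-commuting subset of $\mathcal{Q}$ of cardinality $2q$ which is not contained in any strictly larger non-commuting subset of $\mathcal{Q}$.
   Context: A line in $\mathbb{F}_q^3$ is a set $\{p+tv: t\in\mathbb{F}_q\}$ with $p\in\mathbb{F}_q^3$, $v\in\mathbb{F}_q^3\setminus\{0\}$. A subset of $\mathcal{Q}$ is non-commuting if no two distinct elements of it commute. *)

From HB Require Import structures.
From mathcomp Require Import all_boot all_order all_algebra all_field.
Set Implicit Arguments. Unset Strict Implicit. Unset Printing Implicit Defensive.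
Import GRing.Theory.
Local Open Scope ring_scope.

(* Points of F_q^3 are triples ((x, y), z) : F * F * F. *)

Definition qcommute (F : fieldType) (a b : F * F * F) : bool :=
  a.1.1 * b.1.2 - a.1.2 * b.1.1 == a.2 - b.2.

Definition is_line (F : finFieldType) (L : {set F * F * F}) : Prop :=
  exists (p v : F * F * F), v != (0, 0, 0) /\
    L = [set ((p.1.1 + t * v.1.1, p.1.2 + t * v.1.2), p.2 + t * v.2) | t : F].

Definition non_commuting (F : finFieldType) (S : {set F * F * F}) : Prop :=
  forall a b, a \in S -> b \in S -> a != b -> ~~ qcommute a b.

From HB Require Import structures.
From mathcomp Require Import all_boot all_order all_algebra all_field.
From mathcomp Require Import ring.
Set Implicit Arguments. Unset Strict Implicit. Unset Printing Implicit Defensive.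
Import GRing.Theory.
Local Open Scope ring_scope.

(* Take L1 = {(t, 0, t)} and L2 = {(t, 1, 1)}. A point (u, 0, u) of L1 commutes
   with (x, y, z) iff u (1 - y) = z, and a point (u, 1, 1) of L2 iff
   u y - x = 1 - z. Inside L1 :|: L2 these equations force the two points to
   coincide, so the union is non-commuting; conversely every point of F^3
   commutes with a point of L1 (if y <> 1) or of L2 (if y = 1), so no point can
   be added. *)

Lemma non_commuting_maximal (F : finFieldType) (S T : {set F * F * F}) :
  (forall b, exists2 a, a \in S & qcommute a b) ->
  non_commuting T -> S \subset T -> T = S.
Proof.
move=> commS ncT sST; apply/eqP; rewrite eqEsubset sST andbT.
apply/subsetP => b bT; have [a aS ab] := commS b.
have [<- //|neq_ab] := eqVneq a b.
by move: (ncT a b (subsetP sST a aS) bT neq_ab); rewrite ab.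
Qed.

Section TwoLines.
Variable F : finFieldType.

Definition diag_pt (t : F) : F * F * F := (t, 0, t).
Definition level_pt (t : F) : F * F * F := (t, 1, 1).

Definition diag_line : {set F * F * F} := [set diag_pt t | t : F].
Definition level_line : {set F * F * F} := [set level_pt t | t : F].

Lemma qcommute_diag_pt u (b : F * F * F) :
  qcommute (diag_pt u) b = (u * (1 - b.1.2) == b.2).
Proof.
case: b => [[x y] z]; rewrite /qcommute /= mul0r subr0.
by apply/eqP/eqP => h; [rewrite mulrBr mulr1 h | rewrite -h]; ring.
Qed.

Lemma qcommute_level_pt u (b : F * F * F) :
  qcommute (level_pt u) b = (u * b.1.2 - b.1.1 == 1 - b.2).
Proof. by rewrite /qcommute /= mul1r. Qed.

Lemma diag_pt_inj : injective diag_pt.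
Proof. by move=> s t [->]. Qed.

Lemma level_pt_inj : injective level_pt.
Proof. by move=> s t [->]. Qed.

Lemma is_line_diag_line : is_line diag_line.
Proof.
exists (0, 0, 0), (1, 0, 1); split.
  by apply/negP => /eqP [] /eqP; rewrite oner_eq0.
by apply: eq_imset => t; rewrite /diag_pt mulr1 mulr0 !add0r.
Qed.

Lemma is_line_level_line : is_line level_line.
Proof.
exists (0, 1, 1), (1, 0, 0); split.
  by apply/negP => /eqP [] /eqP; rewrite oner_eq0.
by apply: eq_imset => t; rewrite /level_pt mulr1 mulr0 add0r addr0.
Qed.

Lemma disjoint_diag_level : [disjoint diag_line & level_line].
Proof.
apply/pred0P => a /=; apply/andP => -[/imsetP[s _ ->] /imsetP[t _ []]] _ /eqP.
by rewrite eq_sym oner_eq0.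
Qed.

Lemma card_diag_level : #|diag_line :|: level_line| = (2 * #|F|)%N.
Proof.
rewrite cardsU disjoint_setI0 ?disjoint_diag_level // cards0 subn0.
by rewrite (card_imset _ diag_pt_inj) (card_imset _ level_pt_inj) addnn mul2n.
Qed.

Lemma non_commuting_diag_level : non_commuting (diag_line :|: level_line).
Proof.
have one_neq0 : (1 : F) != 0 by rewrite oner_eq0.
move=> a b; rewrite !in_setU.
case/orP=> /imsetP[u _ ->]; case/orP=> /imsetP[t _ ->]; apply: contra.
- by rewrite qcommute_diag_pt /= subr0 mulr1 => /eqP ->.
- by rewrite qcommute_diag_pt /= subrr mulr0 eq_sym (negbTE one_neq0).
- rewrite qcommute_level_pt /= mulr0 sub0r => /eqP opp_t.
  by move: one_neq0; rewrite -(subrK t 1) -opp_t addNr eqxx.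
- by rewrite qcommute_level_pt /= mulr1 subrr subr_eq0 => /eqP ->.
Qed.

Lemma commutes_with_diag_level b :
  exists2 a, a \in diag_line :|: level_line & qcommute a b.
Proof.
case: b => [[x y] z]; case: (eqVneq y 1) => [->|y_neq1].
  exists (level_pt (1 + x - z)); first by rewrite in_setU imset_f ?orbT.
  by rewrite qcommute_level_pt /=; apply/eqP; ring.
have nz : 1 - y != 0 by rewrite subr_eq0 eq_sym.
exists (diag_pt (z / (1 - y))); first by rewrite in_setU imset_f.
by rewrite qcommute_diag_pt /= divfK.
Qed.

End TwoLines.

Theorem lemma7p3 (F : finFieldType) :
  exists L1 L2 : {set F * F * F},
    [/\ is_line L1, is_line L2,
        non_commuting (L1 :|: L2),
        #|L1 :|: L2| = (2 * #|F|)%N &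
        forall T : {set F * F * F},
          non_commuting T -> (L1 :|: L2) \subset T -> T = L1 :|: L2].
Proof.
exists (diag_line F), (level_line F); split.
- exact: is_line_diag_line.
- exact: is_line_level_line.
- exact: non_commuting_diag_level.
- exact: card_diag_level.
- move=> T; apply: non_commuting_maximal; exact: commutes_with_diag_level.
Qed.
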